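(* Perform a round-robin tournament on the $n$ elements $x_1,\dots,x_n$ (every pair is compared exactly once), and list the elements in increasing order of their number of wins, breaking ties arbitrarily. Then the resulting list is $2$-sorted: whenever $y$ is listed before $x$ we have $x \ge y - 2$ (equivalently, if $y < x-2$ then $y$ is listed before $x$).
   Context: Model of imprecise comparisons: there are $n$ elements $x_1,\dots,x_n$, each with a fixed unknown real value; we identify an element with its value. An algorithm accesses the elements only through a comparator: asked to compare $x_i$ and $x_j$, it answers either ''$x_i \ge x_j$'' (we say $x_i$ defeats $x_j$, or $x_j$ loses to $x_i$) or ''$x_j \ge x_i$''. If $|x_i-x_j|>1$ the answer is correct; if $|x_i-x_j|\le 1$ the answer is arbitrary (possibly chosen adversarially and adaptively, and possibly different on repeated queries). A round-robin tournament on a set compares every pair of its elements once; the number of wins of an element is the number of elements it defeats. A list $x_{\pi(1)},\dots,x_{\pi(n)}$ is $k$-sorted if $x_{\pi(i)} \ge x_{\pi(j)} - k$ for all $i>j$. *)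

From mathcomp Require Import all_boot all_order all_fingroup all_algebra.
Set Implicit Arguments. Unset Strict Implicit. Unset Printing Implicit Defensive.
Import Order.TTheory GRing.Theory Num.Theory.
Local Open Scope ring_scope.

(* A round-robin tournament outcome is a relation [beats] : beats i j means
   "the comparator answered x_i >= x_j", i.e. x_i defeats x_j. *)

Definition round_robin (n : nat) (beats : rel 'I_n) : Prop :=
  forall i j : 'I_n, i != j -> beats i j = ~~ beats j i.

Definition imprecise_consistent (R : realFieldType) (n : nat)
  (x : 'I_n -> R) (beats : rel 'I_n) : Prop :=
  forall i j : 'I_n, i != j -> 1 < `|x i - x j| -> beats i j = (x j <= x i).

Definition wins (n : nat) (beats : rel 'I_n) (i : 'I_n) : nat :=
  #|[set j : 'I_n | (j != i) && beats i j]|.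

(* The list x_{pi(0)}, ..., x_{pi(n-1)} is k-sorted. *)
Definition k_sorted (R : realFieldType) (n : nat) (x : 'I_n -> R)
  (pi : {perm 'I_n}) (k : R) : Prop :=
  forall a b : 'I_n, (b < a)%N -> x (pi b) - k <= x (pi a).

From mathcomp Require Import all_boot all_order all_fingroup all_algebra.
From mathcomp Require Import lra.
Set Implicit Arguments. Unset Strict Implicit. Unset Printing Implicit Defensive.
Import Order.TTheory GRing.Theory Num.Theory.
Local Open Scope ring_scope.

(* If [x u + 2 < x v], every element defeated by [u] lies at most [1] above
   [x u], hence more than [1] below [x v], so [v] defeats it as well; [v] also
   defeats [u] itself.  Thus [v] has strictly more wins than [u], and a list
   sorted by wins cannot put [v] before [u]. *)

Section ImpreciseTournament.

Variables (R : realFieldType) (n : nat) (x : 'I_n -> R) (beats : rel 'I_n).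
Hypothesis beats_consistent : imprecise_consistent x beats.

Lemma beats_of_gap (i j : 'I_n) : x j + 1 < x i -> (j != i) && beats i j.
Proof.
move=> gap_ij.
have neq_ij : i != j by apply: contraTneq gap_ij => ->; lra.
have far : 1 < `|x i - x j| by apply: lt_le_trans (ler_norm _); lra.
by rewrite eq_sym neq_ij (beats_consistent neq_ij far); apply: ltW; lra.
Qed.

Lemma defeated_le_add1 (i j : 'I_n) :
  j != i -> beats i j -> x j <= x i + 1.
Proof.
rewrite eq_sym => neq_ij beats_ij.
have [/ler_normlP [? ?]|far] := lerP `|x i - x j| 1; first lra.
by move: beats_ij; rewrite (beats_consistent neq_ij far) => ?; lra.
Qed.

Lemma wins_lt_of_gap (u v : 'I_n) :
  x u + 2 < x v -> (wins beats u < wins beats v)%N.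
Proof.
move=> gap_uv; apply: proper_card; apply/properP; split.
  apply/subsetP => j; rewrite !inE => /andP [neq_ju beats_uj].
  by apply: beats_of_gap; have := defeated_le_add1 neq_ju beats_uj; lra.
by exists u; rewrite !inE ?eqxx //; apply: beats_of_gap; lra.
Qed.

End ImpreciseTournament.

Theorem mainTheorem1 (R : realFieldType) (n : nat) (x : 'I_n -> R)
  (beats : rel 'I_n) (pi : {perm 'I_n}) :
  round_robin beats ->
  imprecise_consistent x beats ->
  (forall a b : 'I_n, (a <= b)%N -> (wins beats (pi a) <= wins beats (pi b))%N) ->
  k_sorted x pi 2.
Proof.
move=> _ consistent wins_sorted a b lt_ba.
rewrite leNgt; apply/negP => gap.
have := wins_sorted b a (ltnW lt_ba).
by rewrite leqNgt (wins_lt_of_gap consistent) //; lra.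
Qed.
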